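(* Let $q$ be a prime power, $k,m,t$ positive integers, and $V=\mathbb F_{q^m}^{k+1}$. Let $H$ be an $\mathbb F_{q^m}$-hyperplane of $V$ and let $W\subseteq H$ be an $\mathbb F_q$-subspace with $\dim_{\mathbb F_q}(W)=t$ which is a linear cutting blocking set in $H$ (i.e. $\langle W\rangle_{\mathbb F_{q^m}}=H$ and $\langle W\cap H'\rangle_{\mathbb F_{q^m}}=H'$ for every $\mathbb F_{q^m}$-hyperplane $H'$ of $H$). Let $v\in V\setminus H$. Then $U=W+\langle v\rangle_{\mathbb F_{q^m}}$ is a cutting $[t+m,k+1]_{q^m/q}$ system.
   Context: An $[n,k]_{q^m/q}$ system is an $\mathbb F_q$-subspace $U$ of $\mathbb F_{q^m}^k$ with $\dim_{\mathbb F_q}(U)=n$ and $\langle U\rangle_{\mathbb F_{q^m}}=\mathbb F_{q^m}^k$. It is cutting if for every $\mathbb F_{q^m}$-hyperplane $\Pi$ of the ambient space one has $\langle \Pi\cap U\rangle_{\mathbb F_{q^m}}=\Pi$. *)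

From HB Require Import structures.
From mathcomp Require Import all_boot all_order all_algebra all_field.
Set Implicit Arguments. Unset Strict Implicit. Unset Printing Implicit Defensive.
Import GRing.Theory.
Local Open Scope ring_scope.

(* F plays the role of F_q, L the role of F_{q^m} (a finite extension of F),
   ambient space 'rV[L]_n = F_{q^m}^n.  F_q-subspaces are represented as
   predicates closed under + and scaling by elements of F (embedded in L). *)

Definition Fscale (F : fieldType) (L : fieldExtType F) (n : nat)
  (a : F) (x : 'rV[L]_n) : 'rV[L]_n := (a%:A : L) *: x.

Definition is_Fsubspace (F : fieldType) (L : fieldExtType F) (n : nat)
  (U : 'rV[L]_n -> Prop) : Prop :=
  [/\ U 0, (forall x y, U x -> U y -> U (x + y))
    & (forall (a : F) x, U x -> U (Fscale a x))].

Definition Fdim (F : fieldType) (L : fieldExtType F) (n : nat)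
  (U : 'rV[L]_n -> Prop) (d : nat) : Prop :=
  exists b : 'I_d -> 'rV[L]_n,
    [/\ (forall i, U (b i)),
        (forall c : 'I_d -> F, \sum_i Fscale (c i) (b i) = 0 -> forall i, c i = 0)
      & (forall u, U u -> exists c : 'I_d -> F, u = \sum_i Fscale (c i) (b i))].

Definition Lspan_is (L : fieldType) (n : nat) (U : 'rV[L]_n -> Prop)
  (S : {vspace 'rV[L]_n}) : Prop :=
  (forall u, U u -> u \in S) /\
  exists s : seq 'rV[L]_n, (forall x, x \in s -> U x) /\ <<s>>%VS = S.

Definition is_hyperplane_of (L : fieldType) (n : nat)
  (P S : {vspace 'rV[L]_n}) : Prop :=
  (P <= S)%VS /\ \dim P = (\dim S).-1.

Definition is_cutting_system (F : fieldType) (L : fieldExtType F) (n : nat)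
  (U : 'rV[L]_n -> Prop) (d : nat) : Prop :=
  [/\ is_Fsubspace U, Fdim U d, Lspan_is U fullv
    & forall P : {vspace 'rV[L]_n}, is_hyperplane_of P fullv ->
        Lspan_is (fun x => U x /\ x \in P) P].

From mathcomp Require Import all_boot all_order all_algebra all_field.
From mathcomp Require Import zify.
Set Implicit Arguments. Unset Strict Implicit. Unset Printing Implicit Defensive.
Import GRing.Theory.
Local Open Scope ring_scope.

(* Write U = W + <v>.  Since v lies outside H, the sum is direct, so U has
   F-dimension t + m and spans H + <v> = V.  Let P be a hyperplane of V.  If
   P = H, then U cap P contains W, which spans H.  Otherwise H' = H cap P is a
   hyperplane of both H and P, and the cutting property of W shows that
   W cap H' spans H'.  As W spans H, it has a vector w0 outside H'.  If v is
   not in P, the component of w0 along P in V = P + <v> is a vector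
   u = w0 - c v of U cap P outside H (otherwise take u = v), so U cap P spans
   H' + <u> = P. *)

Lemma dim_addv_line (K : fieldType) (vT : vectType K) (H : {vspace vT}) (v : vT) :
  v \notin H -> \dim (H + <[v]>) = (\dim H).+1.
Proof.
move=> vNH; have v0 : v != 0 by apply: contraNneq vNH => ->; rewrite mem0v.
rewrite dimv_disjoint_sum ?dim_vline ?v0 ?addn1 //.
apply/eqP; rewrite -subv0; apply/subvP => x /memv_capP [xH /vlineP [c xE]].
rewrite memv0 xE; have [-> | c0] := eqVneq c 0; first by rewrite scale0r.
by move: xH; rewrite xE rpredZeq (negPf c0) (negPf vNH).
Qed.

Section Hyperplanes.

Variables (K : fieldType) (n : nat).
Implicit Types (X Y : 'rV[K]_n -> Prop) (H P S T : {vspace 'rV[K]_n}).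
Implicit Types (u v : 'rV[K]_n).

Lemma hyperplane_addv_line H S v :
  is_hyperplane_of H S -> v \in S -> v \notin H -> (H + <[v]>)%VS = S.
Proof.
move=> [sHS dimH] vS vNH; apply/eqP; rewrite eqEdim subv_add sHS -memvE vS.
by rewrite dim_addv_line // dimH leqSpred.
Qed.

Lemma hyperplane_eq H P S :
  is_hyperplane_of H S -> is_hyperplane_of P S -> (H <= P)%VS -> H = P.
Proof.
by move=> [_ dimH] [_ dimP] sHP; apply/eqP; rewrite eqEdim sHP dimH dimP leqnn.
Qed.

Lemma hyperplane_cap H P S :
  is_hyperplane_of H S -> is_hyperplane_of P S -> P != H ->
  is_hyperplane_of (H :&: P) H.
Proof.
move=> hH hP nPH; split; first exact: capvSl.
have [[sHS dimH] [sPS dimP]] := (hH, hP).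
have ltHHP : (\dim H < \dim (H + P))%N.
  rewrite ltn_neqAle dimvS ?addvSl // andbT; apply: contra nPH => /eqP dimHP.
  have HP : H = (H + P)%VS by apply/eqP; rewrite eqEdim addvSl dimHP leqnn.
  by apply/eqP/(hyperplane_eq hP hH); rewrite [H]HP addvSr.
have leHPS : (\dim (H + P) <= \dim S)%N by rewrite dimvS // subv_add sHS.
have := dimv_sum_cap H P; rewrite dimP; move: ltHHP leHPS; rewrite dimH.
lia.
Qed.

Lemma Lspan_is_between X Y S :
  Lspan_is X S -> (forall x, X x -> Y x) -> (forall y, Y y -> y \in S) ->
  Lspan_is Y S.
Proof.
by move=> [_ [s [sX sE]]] XY YS; split=> //; exists s; split=> // x /sX /XY.
Qed.

Lemma Lspan_is_add_vline X S u :
  Lspan_is X S -> Lspan_is (fun y => X y \/ y = u) (S + <[u]>)%VS.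
Proof.
move=> [XS [s [sX sE]]]; split.
  move=> y [/XS yS | ->]; first exact: subvP (addvSl S _) _ yS.
  exact: subvP (addvSr S _) _ (memv_line u).
exists (s ++ [:: u]); split; last by rewrite span_cat span_seq1 sE.
by move=> x; rewrite mem_cat inE => /orP [/sX | /eqP]; [left | right].
Qed.

Lemma Lspan_is_hyperplane_add X S T u :
  is_hyperplane_of S T -> u \in T -> u \notin S -> Lspan_is X S ->
  Lspan_is (fun y => X y \/ y = u) T.
Proof.
move=> hS uT uNS /(Lspan_is_add_vline u).
by rewrite (hyperplane_addv_line hS uT uNS).
Qed.

Lemma Lspan_is_not_subv X S T :
  Lspan_is X S -> ~~ (S <= T)%VS -> exists2 x, X x & x \notin T.
Proof.
move=> [_ [s [sX <-]]] nST.
have [x xs xNT] : exists2 x, x \in s & x \notin T.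
  by apply/allPn; apply: contra nST => /allP /span_subvP.
by exists x; first exact: sX.
Qed.

End Hyperplanes.

Section AddLine.

Variables (F : fieldType) (L : fieldExtType F) (n : nat).
Implicit Types (W : 'rV[L]_n -> Prop) (S H P : {vspace 'rV[L]_n}) (u v w : 'rV[L]_n).

Definition add_line W v u : Prop := exists w (c : L), W w /\ u = w + c *: v.

Lemma is_Fsubspace_add_line W v : is_Fsubspace W -> is_Fsubspace (add_line W v).
Proof.
case=> W0 WD WZ; split.
- by exists 0, 0; rewrite scale0r addr0.
- move=> _ _ [w1 [c1 [Ww1 ->]]] [w2 [c2 [Ww2 ->]]].
  by exists (w1 + w2), (c1 + c2); rewrite scalerDl addrACA; split; first exact: WD.
- move=> a _ [w [c [Ww ->]]]; exists (Fscale a w), (a%:A * c).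
  by rewrite /Fscale scalerDr scalerA; split; first exact: WZ.
Qed.

Lemma addv_line_eq0 S w v (c : L) :
  w \in S -> v \notin S -> w + c *: v = 0 -> w = 0 /\ c = 0.
Proof.
move=> wS vNS wcv0; suff c0 : c = 0 by move: wcv0; rewrite c0 scale0r addr0.
apply: contraNeq vNS => c0.
have : c *: v \in S by rewrite -(addr0_eq wcv0) rpredN.
by rewrite rpredZeq (negPf c0).
Qed.

(* The F-basis of W followed by the vectors e_j v, for an F-basis (e_j) of L. *)
Lemma Fdim_add_line W S v t :
  W 0 -> Fdim W t -> (forall w, W w -> w \in S) -> v \notin S ->
  Fdim (add_line W v) (t + \dim {:L}).
Proof.
move=> W0 [b [Wb bfree bspan]] sWS vNS.
set m := \dim {:L}; set e := vbasis {:L}.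
pose b' (i : 'I_(t + m)) := match split i with inl j => b j | inr j => e`_j *: v end.
have b'E (c : 'I_(t + m) -> F) : \sum_i Fscale (c i) (b' i) =
    \sum_j Fscale (c (lshift m j)) (b j) + (\sum_j c (rshift t j) *: e`_j) *: v.
  rewrite big_split_ord /= scaler_suml; congr (_ + _); apply: eq_bigr => j _.
    by rewrite /b' (unsplitK (inl j)).
  by rewrite /b' (unsplitK (inr j)) /Fscale scalerA mulr_algl.
exists b'; split.
- move=> i; rewrite /b'; case: (split i) => j.
    by exists (b j), 0; rewrite scale0r addr0.
  by exists 0, e`_j; rewrite add0r.
- move=> c; rewrite b'E => bc_ec0.
  have [|bc0 ec0] := addv_line_eq0 _ vNS bc_ec0.
    by apply: memv_suml => j _; rewrite /Fscale memvZ // sWS.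
  have cr : forall j, c (rshift t j) = 0.
    by apply/freeP; [exact: basis_free (vbasisP _) | exact: ec0].
  have cl : forall j, c (lshift m j) = 0 by exact: bfree.
  by move=> i; rewrite -[i]splitK; case: (split i).
- move=> _ [w [c [Ww ->]]]; have [cw ->] := bspan w Ww.
  exists (fun i => match split i with inl j => cw j | inr j => coord e j c end).
  rewrite b'E; congr (_ + _ *: _).
    by apply: eq_bigr => j _; rewrite (unsplitK (inl j)).
  rewrite [LHS](coord_vbasis (memvf c)).
  by apply: eq_bigr => j _; rewrite (unsplitK (inr j)).
Qed.

Lemma add_line_meets_hyperplane W H P S w0 v :
  W 0 -> W w0 -> is_hyperplane_of P S -> w0 \in S -> v \in S ->
  w0 \in H -> w0 \notin P -> v \notin H ->
  exists u, [/\ add_line W v u, u \in P & u \notin H].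
Proof.
move=> W0 Ww0 hP w0S vS w0H w0NP vNH.
have [vP | vNP] := boolP (v \in P).
  by exists v; split=> //; exists 0, 1; rewrite scale1r add0r.
have : w0 \in (P + <[v]>)%VS by rewrite (hyperplane_addv_line hP vS vNP).
move=> /memv_addP [p pP [_ /vlineP [c ->] w0E]].
exists p; split=> //; first by exists w0, (- c); split=> //; rewrite scaleNr w0E addrK.
apply: contra vNH => pH.
have c0 : c != 0 by apply: contra w0NP => /eqP c0; rewrite w0E c0 scale0r addr0.
have : c *: v \in H by rewrite (_ : c *: v = w0 - p) ?rpredB // w0E addrAC subrr add0r.
by rewrite rpredZeq (negPf c0).
Qed.

End AddLine.

Theorem proposition3p7 (F : finFieldType) (L : fieldExtType F) (k m t : nat)
  (hk : (0 < k)%N) (hm : (0 < m)%N) (ht : (0 < t)%N)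
  (hLm : \dim (fullv : {vspace L}) = m)
  (H : {vspace 'rV[L]_(k.+1)}) (hH : is_hyperplane_of H fullv)
  (W : 'rV[L]_(k.+1) -> Prop) (hW : is_Fsubspace W) (hWt : Fdim W t)
  (hWH : forall w, W w -> w \in H)
  (hWspan : Lspan_is W H)
  (hWcut : forall H' : {vspace 'rV[L]_(k.+1)}, is_hyperplane_of H' H ->
             Lspan_is (fun x => W x /\ x \in H') H')
  (v : 'rV[L]_(k.+1)) (hv : v \notin H) :
  is_cutting_system (fun u => exists w (c : L), W w /\ u = w + c *: v) (t + m).
Proof.
have [W0 _ _] := hW.
have WU w : W w -> add_line W v w by exists w, 0; rewrite scale0r addr0.
have vU : add_line W v v by exists 0, 1; rewrite scale1r add0r.
rewrite -hLm; split.
- exact: is_Fsubspace_add_line.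
- exact: Fdim_add_line hWt hWH hv.
- apply: Lspan_is_between (Lspan_is_hyperplane_add hH (memvf v) hv hWspan) _ _.
    by move=> x [/WU | ->].
  by move=> x _; rewrite memvf.
move=> P hP; have [-> | nPH] := eqVneq P H.
  apply: Lspan_is_between hWspan _ _ => [x Wx | x [] //].
  by split; [exact: WU | exact: hWH].
have hH'H := hyperplane_cap hH hP nPH.
have hH'P : is_hyperplane_of (H :&: P) P
  by rewrite capvC; apply: hyperplane_cap hP hH _; rewrite eq_sym.
have [w0 Ww0 w0NH'] : exists2 w0, W w0 & w0 \notin (H :&: P)%VS.
  apply: Lspan_is_not_subv hWspan _; apply: contra nPH => sHH'.
  rewrite eq_sym; apply/eqP/(hyperplane_eq hH hP).
  exact: subv_trans sHH' (capvSr H P).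
have w0H := hWH _ Ww0.
have w0NP : w0 \notin P by apply: contra w0NH'; rewrite memv_cap w0H.
have [u [Uu uP uNH]] :=
  add_line_meets_hyperplane W0 Ww0 hP (memvf w0) (memvf v) w0H w0NP hv.
have uNH' : u \notin (H :&: P)%VS by apply: contra uNH; rewrite memv_cap => /andP [].
apply: Lspan_is_between (Lspan_is_hyperplane_add hH'P uP uNH' (hWcut _ hH'H)) _ _.
  by move=> x [[/WU Ux /(subvP (capvSr H P)) xP] | ->]; split.
by move=> x [].
Qed.
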